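(* Let $k\ge 1$ and let $G$ be a minimally $k$-connected graph with $n$ vertices and $m$ edges. Then $$|V_k|\ge (k+1)n-2m.$$
   Context: All graphs are finite, simple and undirected. A $k$-separator is a set of $k\ge 0$ vertices whose deletion leaves a disconnected graph. A graph is $k$-connected if it has more than $k$ vertices and contains no $(k-1)$-separator. A $k$-connected graph $G$ is minimally $k$-connected if $G-e$ is not $k$-connected for every edge $e$. $V_k$ denotes the set of vertices of $G$ of degree exactly $k$. *)

From mathcomp Require Import all_boot.
Set Implicit Arguments. Unset Strict Implicit. Unset Printing Implicit Defensive.

Definition simple_graph (T : finType) (e : rel T) : Prop :=
  symmetric e /\ irreflexive e.

Definition del_vertices (T : finType) (e : rel T) (S : {set T}) : rel T :=
  [rel x y | [&& e x y, x \notin S & y \notin S]].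

Definition disconnected_after (T : finType) (e : rel T) (S : {set T}) : Prop :=
  exists x y, [/\ x \notin S, y \notin S & ~~ connect (del_vertices e S) x y].

Definition separator (T : finType) (e : rel T) (j : nat) (S : {set T}) : Prop :=
  #|S| = j /\ disconnected_after e S.

(* G is k-connected: more than k vertices and no (k-1)-separator
   (for k = 0 there are no (-1)-separators, encoded by #|S| + 1 = k). *)
Definition k_connected (T : finType) (e : rel T) (k : nat) : Prop :=
  k < #|T| /\ forall S : {set T}, #|S|.+1 = k -> ~ disconnected_after e S.

Definition del_edge (T : finType) (e : rel T) (u v : T) : rel T :=
  [rel x y | e x y && ~~ (((x == u) && (y == v)) || ((x == v) && (y == u)))].

Definition minimally_k_connected (T : finType) (e : rel T) (k : nat) : Prop :=
  k_connected e k /\ forall u v, e u v -> ~ k_connected (del_edge e u v) k.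

Definition degree (T : finType) (e : rel T) (x : T) : nat := #|[set y | e x y]|.

Definition V_deg (T : finType) (e : rel T) (k : nat) : {set T} :=
  [set x | degree e x == k].

Definition edge_set (T : finType) (e : rel T) : {set {set T}} :=
  [set E : {set T} | [exists u, exists v, e u v && (E == [set u; v])]].

Definition num_edges (T : finType) (e : rel T) : nat := #|edge_set e|.

From mathcomp Require Import all_boot.
Set Implicit Arguments. Unset Strict Implicit. Unset Printing Implicit Defensive.

(* Every vertex x has degree
   at least k: otherwise a (k-1)-set containing the neighbourhood of x but not
   x separates x from the other vertices.  Hence each vertex contributes at
   least k+1 to |V_k| + sum of degrees, and the sum of degrees is at most 2m
   since each edge {u,v} accounts for the two ordered pairs (u,v), (v,u). *)

Lemma subset_card_between (T : finType) (N C : {set T}) m :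
  N \subset C -> #|N| <= m <= #|C| ->
  exists S : {set T}, [/\ N \subset S, S \subset C & #|S| = m].
Proof.
move=> sNC /andP [leNm lemC].
have : m - #|N| <= #|C :\: N| by rewrite cardsD (setIidPr sNC) leq_sub2r.
case/card_geqP=> s [uniq_s size_s sub_s].
set D := [set y in s].
have /subsetDP [sDC dDN] : D \subset C :\: N.
  by apply/subsetP=> y; rewrite inE => /sub_s.
exists (N :|: D); split.
- exact: subsetUl.
- by rewrite subUset sNC sDC.
- rewrite cardsU setIC (disjoint_setI0 dDN) cards0 subn0.
  by rewrite cardsE (card_uniqP uniq_s) size_s subnKC.
Qed.

Lemma connect_from_sink (T : finType) (r : rel T) x y :
  (forall z, ~~ r x z) -> connect r x y -> y = x.
Proof.
move=> sink_x /connectP [[|z p] /=]; first by move=> _ ->.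
by rewrite (negbTE (sink_x z)).
Qed.

Lemma k_connected_degree_geq (T : finType) (e : rel T) k x :
  irreflexive e -> k_connected e k -> k <= degree e x.
Proof.
move=> irr [k_lt_T no_sep]; rewrite leqNgt; apply/negP=> deg_lt_k.
set N := [set y | e x y].
have sNx : N \subset [set~ x].
  by apply/subsetP=> y; rewrite !inE; apply: contraTneq => ->; rewrite irr.
have k_gt0 : 0 < k by apply: leq_ltn_trans deg_lt_k.
have [S [sNS sSx card_S]] : exists S : {set T},
    [/\ N \subset S, S \subset [set~ x] & #|S| = k.-1].
  apply: subset_card_between sNx _.
  by rewrite -ltnS prednK // deg_lt_k cardsC1 -!subn1 leq_sub2r // ltnW.
have xS : x \notin S by apply: contraTN isT => /(subsetP sSx); rewrite !inE eqxx.
have [y yx yS] : exists2 y, y != x & y \notin S.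
  have : 1 < #|~: S| by rewrite cardsCs setCK card_S ltn_subRL addn1 prednK.
  rewrite (cardD1 x) inE xS add1n ltnS => /card_gt0P [y].
  by rewrite !inE => /andP [yx yS]; exists y.
apply: (no_sep S); first by rewrite card_S prednK.
exists x, y; split=> //; apply: contra yx => /connect_from_sink -> //.
move=> z /=; apply/and3P=> -[exz _].
by rewrite (subsetP sNS z) // inE.
Qed.

Lemma card_ordered_pairs_in_edge (T : finType) (e : rel T) (u v : T) :
  irreflexive e ->
  #|[pred p : T * T | e p.1 p.2 && ([set p.1; p.2] == [set u; v])]| <= 2.
Proof.
move=> irr; apply: (@leq_trans #|[set (u, v); (v, u)]|); last first.
  by rewrite cards2 ltnS leq_b1.
apply/subset_leq_card/subsetP=> -[a b]; rewrite inE /= => /andP [eab /eqP E].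
have ab : a != b by apply: contraTneq eab => ->; rewrite irr.
have : a \in [set u; v] /\ b \in [set u; v] by rewrite -E !inE !eqxx orbT.
rewrite !inE => -[/orP [] /eqP ? /orP [] /eqP ?]; subst a b;
  by rewrite ?eqxx ?orbT in ab *.
Qed.

Lemma mem_edge_set (T : finType) (e : rel T) u v :
  e u v -> [set u; v] \in edge_set e.
Proof.
by move=> euv; rewrite inE; apply/existsP; exists u; apply/existsP; exists v; rewrite euv eqxx.
Qed.

Lemma sum_degree_leq (T : finType) (e : rel T) :
  irreflexive e -> \sum_x degree e x <= 2 * num_edges e.
Proof.
move=> irr.
have -> : \sum_x degree e x = \sum_(p : T * T | e p.1 p.2) 1.
  rewrite -(pair_big_dep xpredT (fun x y => e x y) (fun _ _ => 1)) /=.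
  by apply: eq_bigr => x _; rewrite /degree -sum1_card; apply: eq_bigl => y; rewrite inE.
rewrite (partition_big (fun p : T * T => [set p.1; p.2]) (mem (edge_set e))) /=;
  last by case=> u v /=; apply: mem_edge_set.
rewrite /num_edges -sum1_card big_distrr /=.
apply: leq_sum => E; rewrite inE => /existsP [u /existsP [v /andP [_ /eqP ->]]].
by rewrite muln1 sum1_card (card_ordered_pairs_in_edge u v irr).
Qed.

Theorem mainTheorem3 (T : finType) (e : rel T) (k : nat) :
  simple_graph e -> 1 <= k -> minimally_k_connected e k ->
  k.+1 * #|T| <= #|V_deg e k| + 2 * num_edges e.
Proof.
move=> [_ irr] _ [kc _].
apply: leq_trans (leq_add (leqnn _) (sum_degree_leq irr)).
rewrite -sum1_card [X in _ <= X + _]big_mkcond -big_split /= mulnC -sum_nat_const.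
apply: leq_sum => x _; rewrite /V_deg inE.
have := k_connected_degree_geq x irr kc; rewrite leq_eqVlt => /orP [/eqP <- | k_lt].
  by rewrite eqxx.
by rewrite gtn_eqF.
Qed.
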